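(* Let $(e_n)$ be a uniformly quasi-greedy basic sequence in a Banach lattice $X$ with uniform quasi-greedy constant $C^\vee_{qg}$. Then: (i) for any distinct indices $n_1,\dots,n_m$, $\big\|\bigvee_{k=1}^m\big|\sum_{i=1}^k e_{n_i}\big|\big\|\le C^\vee_{qg}\big\|\sum_{i=1}^m e_{n_i}\big\|$; (ii) for any distinct indices $n_1,\dots,n_m$ and any signs $\varepsilon_i\in\{\pm1\}$, $(2C^\vee_{qg})^{-1}\big\|\bigvee_{k=1}^m\big|\sum_{i=1}^k e_{n_i}\big|\big\|\le\big\|\sum_{i=1}^m\varepsilon_ie_{n_i}\big\|\le\big\|\bigvee_{k=1}^m\big|\sum_{i=1}^k\varepsilon_ie_{n_i}\big|\big\|\le 2C^\vee_{qg}\big\|\sum_{i=1}^m e_{n_i}\big\|$.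
   Context: Let $(e_n)$ be a semi-normalized basic sequence in a Banach lattice $X$ with span $E$ and biorthogonal functionals $e_n^*$. For $x\in E$, the natural greedy ordering $\rho$ of $x$ is the injective map $\mathbb{N}\to\mathbb{N}$ whose range contains $\{n:e_n^*(x)\ne0\}$ and which lists indices by non-increasing $|e_n^*(x)|$, ties broken by increasing index; $\mathcal{G}_m(x)=\sum_{n=1}^m e^*_{\rho(n)}(x)e_{\rho(n)}$ and $\mathcal{G}^\vee_m(x)=\bigvee_{n=1}^m|\mathcal{G}_n(x)|$. The sequence is uniformly quasi-greedy if $C^\vee_{qg}:=\sup_m\sup_{x\in E,\|x\|=1}\|\mathcal{G}^\vee_m(x)\|<\infty$; $C^\vee_{qg}$ is the uniform quasi-greedy constant. (Equivalently, $\sup_m\|G^\vee_{\pi,m}(x)\|\le C^\vee_{qg}\|x\|$ for every greedy ordering $\pi$, where a greedy ordering is any injective $\pi$ whose range contains the support and with $|e^*_{\pi(n)}(x)|$ non-increasing, $G^\vee_{\pi,m}(x)=\bigvee_{n\le m}|\sum_{k\le n}e^*_{\pi(k)}(x)e_{\pi(k)}|$.) *)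

From HB Require Import structures.
From mathcomp Require Import all_boot all_order all_algebra.
From mathcomp Require Import all_classical all_reals all_analysis.
Set Implicit Arguments. Unset Strict Implicit. Unset Printing Implicit Defensive.
Import Order.TTheory GRing.Theory Num.Theory.
Import numFieldNormedType.Exports.
Local Open Scope classical_set_scope.
Local Open Scope ring_scope.

Record banach_lattice (R : realType) (X : completeNormedModType R) := BanachLattice {
  le : X -> X -> Prop;
  sup : X -> X -> X;
  le_refl : forall x, le x x;
  le_trans : forall x y z, le x y -> le y z -> le x z;
  le_antisym : forall x y, le x y -> le y x -> x = y;
  sup_ubl : forall x y, le x (sup x y);
  sup_ubr : forall x y, le y (sup x y);
  sup_least : forall x y z, le x z -> le y z -> le (sup x y) z;
  le_add : forall x y z, le x y -> le (x + z) (y + z);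
  le_scale : forall (a : R) x y, 0 <= a -> le x y -> le (a *: x) (a *: y);
  norm_monotone : forall x y, le (sup x (- x)) (sup y (- y)) -> `|x| <= `|y|
}.

Section Defs.
Variables (R : realType) (X : completeNormedModType R) (L : banach_lattice X).

Definition labs (x : X) : X := sup L x (- x).

Fixpoint bigsup (f : nat -> X) (m : nat) : X :=
  match m with
  | 0%N => f 0%N
  | k.+1 => sup L (bigsup f k) (f k.+1)
  end.
End Defs.

Section Basic.
Variables (R : realType) (X : completeNormedModType R).

Definition semi_normalized (e : nat -> X) : Prop :=
  exists a b : R, 0 < a /\ forall n, a <= `|e n| <= b.

Definition lin_span (e : nat -> X) : set X :=
  [set x | exists (N : nat) (a : nat -> R), x = \sum_(i < N) a i *: e i].
Definition closed_span (e : nat -> X) : set X := closure (lin_span e).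

Definition basic_seq (e : nat -> X) : Prop :=
  forall x, closed_span e x ->
    exists! a : nat -> R, (fun N => \sum_(i < N) a i *: e i) @ \oo --> x.

Definition coef_functionals (e : nat -> X) (es : nat -> X -> R) : Prop :=
  forall x, closed_span e x ->
    (fun N => \sum_(i < N) es i x *: e i) @ \oo --> x.

Definition natural_greedy (c : nat -> R) (rho : nat -> nat) : Prop :=
  injective rho /\
  (forall n, c n != 0 -> exists k, rho k = n) /\
  (forall i j, (i < j)%N ->
     `|c (rho j)| < `|c (rho i)| \/
     (`|c (rho j)| = `|c (rho i)| /\ (rho i < rho j)%N)).

Definition greedy_sum (e : nat -> X) (es : nat -> X -> R) (rho : nat -> nat)
  (x : X) (m : nat) : X :=
  \sum_(k < m) es (rho k) x *: e (rho k).
End Basic.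

Section Greedy.
Variables (R : realType) (X : completeNormedModType R) (L : banach_lattice X).

(* G^v_m(x) = |G_0(x)| v |G_1(x)| v ... v |G_m(x)|, with G_0(x) = 0
   (so that |G_0(x)| = 0 does not change the supremum for m >= 1). *)
Definition greedy_vee (e : nat -> X) (es : nat -> X -> R) (rho : nat -> nat)
  (x : X) (m : nat) : X :=
  bigsup L (fun n => labs L (greedy_sum e es rho x n)) m.

Definition uqg_set (e : nat -> X) (es : nat -> X -> R) : set (\bar R) :=
  [set r | exists (m : nat) (x : X) (rho : nat -> nat),
     [/\ closed_span e x, `|x| = 1, natural_greedy (fun n => es n x) rho &
         r = (`|greedy_vee e es rho x m|)%:E]].

Definition psum (e : nat -> X) (ns : seq nat) (eps : nat -> R) (k : nat) : X :=
  \sum_(i < k) eps i *: e (nth 0%N ns i).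

(* \/_{k=1}^m |sum_{i<=k} eps_i e_{n_i}| (the k = 0 term is |0| = 0) *)
Definition vee_psum (e : nat -> X) (ns : seq nat) (eps : nat -> R) : X :=
  bigsup L (fun k => labs L (psum e ns eps k)) (size ns).
End Greedy.

(* Given signs c_1, ..., c_m on distinct indices n_1, ..., n_m, the perturbed
   coefficients c_i (1 + d (m - i)), d > 0, decrease strictly in modulus, so
   n_1, ..., n_m (followed by the indices outside the support) is the natural
   greedy ordering of the perturbed vector, whose greedy sums are its partial
   sums; the uniform quasi-greedy bound applies to them, and letting d -> 0
   gives part (i) for every choice of signs. For part (ii), after a change of
   signs each partial sum is the difference of a partial sum of the
   rearrangement listing first the indices where the signs agree and one of
   the rearrangement listing first those where they differ; both
   rearrangements have the same total sum, whence the constant 2 C. *)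

From Pilot Require Import Defs.
From HB Require Import structures.
From mathcomp Require Import all_boot all_order all_algebra.
From mathcomp Require Import all_classical all_reals all_analysis.
From mathcomp Require Import zify lra.
Import Order.TTheory GRing.Theory Num.Theory.
Import numFieldNormedType.Exports.
Local Open Scope ring_scope.
Set Implicit Arguments. Unset Strict Implicit. Unset Printing Implicit Defensive.

Section LatticeFacts.
Variables (R : realType) (X : completeNormedModType R) (L : banach_lattice X).
Local Notation "x <<= y" := (le L x y) (at level 70).
Local Notation sup := (Defs.sup L).
Local Notation labs := (Defs.labs L).
Local Notation bigsup := (Defs.bigsup L).

Lemma lleD {a b c d} : a <<= b -> c <<= d -> a + c <<= b + d.
Proof.
move=> le_ab le_cd; apply: Defs.le_trans (le_add c le_ab) _.
by rewrite ![b + _]addrC; apply: le_add.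
Qed.

Lemma lle_labs x : x <<= labs x. Proof. exact: sup_ubl. Qed.

Lemma lleN_labs x : - x <<= labs x. Proof. exact: sup_ubr. Qed.

Lemma labsD x y : labs (x + y) <<= labs x + labs y.
Proof.
apply: sup_least; first by apply: lleD; apply: lle_labs.
by rewrite opprD; apply: lleD; apply: lleN_labs.
Qed.

Lemma labsN x : labs (- x) = labs x.
Proof.
have labsN_le y : labs (- y) <<= labs y.
  by apply: sup_least; [apply: lleN_labs | rewrite opprK; apply: lle_labs].
by apply: le_antisym; rewrite // -{1}[x]opprK.
Qed.

Lemma labs_ge0 x : 0 <<= labs x.
Proof.
have half_ge0 : 0 <= (2 : R)^-1 by rewrite invr_ge0.
have := le_scale half_ge0 (lleD (lle_labs x) (lleN_labs x)).
by rewrite subrr scaler0 -mulr2n -scalerMnr scalerMnl -mulr_natr mulVf ?pnatr_eq0 // scale1r.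
Qed.

Lemma labs_id {a} : 0 <<= a -> labs a = a.
Proof.
move=> a_ge0; apply: le_antisym; last exact: lle_labs.
apply: sup_least; first exact: Defs.le_refl.
apply: (Defs.le_trans _ a_ge0).
by have := le_add (- a) a_ge0; rewrite add0r subrr.
Qed.

Lemma labs0 : labs 0 = 0.
Proof. exact/labs_id/Defs.le_refl. Qed.

Lemma supZ (t : R) a b : 0 < t -> sup (t *: a) (t *: b) = t *: sup a b.
Proof.
move=> t_gt0.
have supZ_le s y z : 0 <= s -> sup (s *: y) (s *: z) <<= s *: sup y z.
  by move=> s_ge0; apply: sup_least; apply: le_scale => //; [apply: sup_ubl | apply: sup_ubr].
apply: le_antisym; first exact/supZ_le/ltW.
have tV_ge0 : 0 <= t^-1 by rewrite invr_ge0 ltW.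
have := le_scale (ltW t_gt0) (supZ_le _ (t *: a) (t *: b) tV_ge0).
by rewrite !scalerA mulVf ?mulfV ?gt_eqF // !scale1r; apply.
Qed.

Lemma labsZ (t : R) x : 0 <= t -> labs (t *: x) = t *: labs x.
Proof.
rewrite le_eqVlt => /orP[/eqP<- | t_gt0]; first by rewrite !scale0r labs0.
by rewrite /Defs.labs -scalerN supZ.
Qed.

Lemma norm_lle {a b} : 0 <<= a -> a <<= b -> `|a| <= `|b|.
Proof.
move=> a_ge0 le_ab; apply: (@norm_monotone _ _ L).
have b_ge0 : 0 <<= b by exact: Defs.le_trans le_ab.
by move: (labs_id a_ge0) (labs_id b_ge0); rewrite /Defs.labs => -> ->.
Qed.

Lemma norm_labs x : `|labs x| = `|x|.
Proof.
have labs_labs : sup (labs x) (- labs x) = sup x (- x) by apply: labs_id; apply: labs_ge0.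
by apply/eqP; rewrite eq_le; apply/andP; split; apply: (@norm_monotone _ _ L);
  rewrite labs_labs; apply: Defs.le_refl.
Qed.

Lemma bigsup_ub f {m k} : (k <= m)%N -> f k <<= bigsup f m.
Proof.
elim: m => [|m IHm]; first by rewrite leqn0 => /eqP ->; apply: Defs.le_refl.
rewrite leq_eqVlt => /orP[/eqP -> | ]; first exact: sup_ubr.
by rewrite ltnS => /IHm le_fk; apply: Defs.le_trans le_fk _; apply: sup_ubl.
Qed.

Lemma bigsup_least f m z : (forall k, (k <= m)%N -> f k <<= z) -> bigsup f m <<= z.
Proof.
elim: m => [|m IHm] le_fz /=; first exact: le_fz.
apply: sup_least; last exact: le_fz.
by apply: IHm => k le_km; apply: le_fz; rewrite (leq_trans le_km).
Qed.

Lemma eq_bigsup f g m : (forall k, (k <= m)%N -> f k = g k) -> bigsup f m = bigsup g m.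
Proof.
elim: m => [|m IHm] eq_fg /=; first exact: eq_fg.
by rewrite eq_fg // IHm // => k le_km; rewrite eq_fg // (leq_trans le_km).
Qed.

Lemma bigsupZ (t : R) f m : 0 < t -> bigsup (fun k => t *: f k) m = t *: bigsup f m.
Proof. by move=> t_gt0; elim: m => //= m ->; rewrite supZ. Qed.

Lemma bigsup_labs_ge0 f m : 0 <<= bigsup (fun k => labs (f k)) m.
Proof. exact: Defs.le_trans (labs_ge0 (f 0%N)) (bigsup_ub (fun k => labs (f k)) (leq0n m)). Qed.

End LatticeFacts.

Section PartialSums.
Variables (R : realType) (X : completeNormedModType R) (e : nat -> X).

Lemma psum0 ns w : psum e ns w 0 = 0.
Proof. exact: big_ord0. Qed.

Lemma psumD ns a b k :
  psum e ns (fun i => a i + b i) k = psum e ns a k + psum e ns b k.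
Proof. by rewrite /psum -big_split; apply: eq_bigr => i _; rewrite scalerDl. Qed.

Lemma psumZ ns (t : R) a k : psum e ns (fun i => t * a i) k = t *: psum e ns a k.
Proof. by rewrite /psum scaler_sumr; apply: eq_bigr => i _; rewrite scalerA. Qed.

Lemma psumN ns a k : psum e ns (fun i => - a i) k = - psum e ns a k.
Proof. by rewrite /psum -sumrN; apply: eq_bigr => i _; rewrite scaleNr. Qed.

Definition seq_bound (ns : seq nat) : nat := (\max_(n <- ns) n).+1.

Lemma seq_bound_gt ns n : n \in ns -> (n < seq_bound ns)%N.
Proof. by move=> n_ns; rewrite ltnS (leq_bigmax_seq (F := fun n => n)). Qed.

Definition seq_coef (ns : seq nat) (w : nat -> R) (n : nat) : R :=
  if n \in ns then w (index n ns) else 0.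

Lemma psum_expand ns w : uniq ns ->
  psum e ns w (size ns) = \sum_(i < seq_bound ns) seq_coef ns w i *: e i.
Proof.
move=> ns_uniq.
have ns_perm : perm_eq [seq i <- iota 0 (seq_bound ns) | i \in ns] ns.
  apply: uniq_perm => [|//|n]; first exact: filter_uniq (iota_uniq _ _).
  rewrite mem_filter mem_iota /= add0n andbC.
  by case: (boolP (n \in ns)) => [/seq_bound_gt -> | _]; rewrite ?andbF.
rewrite (eq_bigr (fun i : 'I_ _ => if (i : nat) \in ns then w (index (i : nat) ns) *: e i else 0));
  last by move=> i _; rewrite /seq_coef; case: ifP; rewrite ?scale0r.
rewrite -big_mkcond /= -(big_mkord (fun i => i \in ns) (fun i => w (index i ns) *: e i))
  -big_filter (perm_big _ ns_perm).
rewrite (big_nth 0%N) big_mkord; apply: eq_bigr => j _.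
by rewrite index_uniq.
Qed.

Lemma psum_closed_span ns w : uniq ns -> closed_span e (psum e ns w (size ns)).
Proof.
by move=> ns_uniq; apply: subset_closure; exists (seq_bound ns), (seq_coef ns w);
  apply: psum_expand.
Qed.

Lemma psum_reorder_filter ns g (p : pred nat) : uniq ns ->
  exists ns' g', [/\ uniq ns',
    forall i, (i < size ns')%N -> exists2 j, (j < size ns)%N & g' i = g j,
    psum e ns' g' (size ns') = psum e ns g (size ns) &
    forall k, (k <= size ns)%N -> exists2 j, (j <= size ns')%N &
      psum e ns' g' j = \sum_(i < k | p i) g i *: e (nth 0%N ns i)].
Proof.
move=> ns_uniq; set m := size ns.
pose ps := [seq i <- iota 0 m | p i] ++ [seq i <- iota 0 m | ~~ p i].
have ps_perm : perm_eq ps (iota 0 m) by rewrite perm_filterC.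
have ps_lt i : i \in ps -> (i < m)%N by rewrite (perm_mem ps_perm) mem_iota.
have ps_size : size ps = m by rewrite (perm_size ps_perm) size_iota.
have psum_ps j : (j <= m)%N -> psum e (map (nth 0%N ns) ps) (fun i => g (nth 0%N ps i)) j =
    \sum_(i <- take j ps) g i *: e (nth 0%N ns i).
  move=> le_jm; rewrite /psum (big_nth 0%N) size_takel ?ps_size // big_mkord.
  apply: eq_bigr => i _; rewrite nth_take // (nth_map 0%N) // ps_size.
  exact: leq_trans (ltn_ord i) le_jm.
exists (map (nth 0%N ns) ps), (fun i => g (nth 0%N ps i)); rewrite size_map ps_size.
split.
- rewrite map_inj_in_uniq ?(perm_uniq ps_perm) ?iota_uniq // => i j i_ps j_ps /eqP.
  by rewrite nth_uniq ?ps_lt // => /eqP.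
- by move=> i i_lt; exists (nth 0%N ps i) => //; rewrite ps_lt // mem_nth ?ps_size.
- rewrite psum_ps // take_oversize ?ps_size // (perm_big _ ps_perm).
  by rewrite /psum -(big_mkord xpredT (fun i => g i *: e (nth 0%N ns i))) /index_iota subn0.
- move=> k le_km; exists (size [seq i <- iota 0 k | p i]).
    by rewrite size_filter (leq_trans (count_size _ _)) ?size_iota.
  have iota_split : iota 0 m = iota 0 k ++ iota k (m - k) by rewrite -{1}(subnKC le_km) iotaD.
  rewrite psum_ps; last by rewrite size_filter (leq_trans (count_size _ _)) ?size_iota.
  rewrite /ps iota_split filter_cat -catA take_size_cat // big_filter.
  by rewrite -(big_mkord p (fun i => g i *: e (nth 0%N ns i))) /index_iota subn0.
Qed.

Variable L : banach_lattice X.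

Lemma vee_psumZ ns (t : R) a : 0 < t ->
  vee_psum L e ns (fun i => t * a i) = t *: vee_psum L e ns a.
Proof.
move=> t_gt0; rewrite /vee_psum -bigsupZ //.
by congr (bigsup L _ _); apply: funext => k; rewrite psumZ labsZ // ltW.
Qed.

Lemma vee_psumN ns a : vee_psum L e ns (fun i => - a i) = vee_psum L e ns a.
Proof. by congr (bigsup L _ _); apply: funext => k; rewrite psumN labsN. Qed.

Lemma vee_psumD_le ns a b :
  le L (vee_psum L e ns (fun i => a i + b i)) (vee_psum L e ns a + vee_psum L e ns b).
Proof.
apply: bigsup_least => k le_km; rewrite psumD.
apply: Defs.le_trans (labsD _ _ _) _.
by apply: lleD; apply: (bigsup_ub L (fun k => labs L (psum e ns _ k)) le_km).
Qed.

Lemma norm_psum_le_vee_psum ns a : `|psum e ns a (size ns)| <= `|vee_psum L e ns a|.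
Proof.
rewrite -(norm_labs L); apply: norm_lle; first exact: labs_ge0.
exact: (bigsup_ub L (fun k => labs L (psum e ns a k)) (leqnn _)).
Qed.

End PartialSums.

Section Coefficients.
Variables (R : realType) (X : completeNormedModType R) (e : nat -> X) (es : nat -> X -> R).
Hypotheses (e_basic : basic_seq e) (es_coef : coef_functionals e es).

Lemma coef_sum (a : nat -> R) N n : (forall i, (N <= i)%N -> a i = 0) ->
  es n (\sum_(i < N) a i *: e i) = a n.
Proof.
move=> a_eq0; set x := \sum_(i < N) _.
have x_span : closed_span e x by apply: subset_closure; exists N, a.
have [b [_ b_unique]] := e_basic x_span.
have a_cvg : ((fun K => \sum_(i < K) a i *: e i) @ \oo --> x)%classic.
  apply: cvg_near_cst; exists N => // K /= le_NK.
  rewrite /x (big_ord_widen K (fun i => a i *: e i) le_NK) [RHS]big_mkcond.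
  apply: eq_bigr => i _; case: ifP => // /negbT; rewrite -leqNgt => /a_eq0 ->.
  by rewrite scale0r.
by have := congr1 (fun f => f n) (esym (b_unique (fun i => es i x) (es_coef x_span)));
  rewrite (b_unique _ a_cvg).
Qed.

Lemma coef0 n : es n 0 = 0.
Proof. by have := @coef_sum (fun=> 0) 0 n; rewrite big_ord0; apply. Qed.

Lemma coef_psum ns w n : uniq ns -> es n (psum e ns w (size ns)) = seq_coef ns w n.
Proof.
move=> ns_uniq; rewrite psum_expand // coef_sum // => i le_bound_i.
rewrite /seq_coef ifF //; apply: contraTF le_bound_i => /seq_bound_gt.
by rewrite ltnNge.
Qed.

Lemma coef_psum_nth ns w j : uniq ns -> (j < size ns)%N ->
  es (nth 0%N ns j) (psum e ns w (size ns)) = w j.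
Proof. by move=> ns_uniq j_lt; rewrite coef_psum // /seq_coef mem_nth // index_uniq. Qed.

Lemma coef_psum_notin ns w n : uniq ns -> n \notin ns ->
  es n (psum e ns w (size ns)) = 0.
Proof. by move=> ns_uniq /negbTE n_notin; rewrite coef_psum // /seq_coef n_notin. Qed.

Definition greedy_order (ns : seq nat) (j : nat) : nat :=
  if (j < size ns)%N then nth 0%N ns j else (seq_bound ns + j)%N.

Lemma natural_greedy_psum ns w : uniq ns ->
  (forall j, (j < size ns)%N -> w j != 0) ->
  (forall i j, (i < j < size ns)%N -> `|w j| < `|w i|) ->
  natural_greedy (fun n => es n (psum e ns w (size ns))) (greedy_order ns).
Proof.
move=> ns_uniq w_neq0 w_decr.
have fresh_notin j : (seq_bound ns + j)%N \notin ns.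
  by apply: contraTN isT => /seq_bound_gt; rewrite ltnNge leq_addr.
rewrite /greedy_order; split; [|split].
- move=> i j; case: (ltnP i (size ns)) => i_lt; case: (ltnP j (size ns)) => j_lt.
  + by move/eqP; rewrite nth_uniq // => /eqP.
  + by move=> eq_ij; have := fresh_notin j; rewrite -eq_ij mem_nth.
  + by move=> eq_ij; have := fresh_notin i; rewrite eq_ij mem_nth.
  + by move/addnI.
- move=> n; case: (boolP (n \in ns)) => [n_ns _ | n_notin].
    by exists (index n ns); rewrite index_mem n_ns nth_index.
  by rewrite coef_psum_notin // eqxx.
- move=> i j lt_ij; case: (ltnP j (size ns)) => j_lt.
    rewrite (ltn_trans lt_ij j_lt) !coef_psum_nth ?(ltn_trans lt_ij) //.
    by left; apply: w_decr; rewrite lt_ij.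
  rewrite coef_psum_notin //; case: ltnP => i_lt.
    by left; rewrite coef_psum_nth // normr0 normr_gt0 w_neq0.
  by rewrite coef_psum_notin //; right; rewrite ltn_add2l.
Qed.

Lemma greedy_sum_psum ns w k : uniq ns -> (k <= size ns)%N ->
  greedy_sum e es (greedy_order ns) (psum e ns w (size ns)) k = psum e ns w k.
Proof.
move=> ns_uniq le_km; apply: eq_bigr => j _.
have j_lt : (j < size ns)%N := leq_trans (ltn_ord j) le_km.
by rewrite /greedy_order j_lt coef_psum_nth.
Qed.

Lemma greedy_vee_psum (L : banach_lattice X) ns w : uniq ns ->
  greedy_vee L e es (greedy_order ns) (psum e ns w (size ns)) (size ns) = vee_psum L e ns w.
Proof. by move=> ns_uniq; apply: eq_bigsup => k le_km; rewrite greedy_sum_psum. Qed.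

End Coefficients.

Lemma ler_of_add_mul_gt0 (F : realFieldType) (a b K : F) :
  (forall d, 0 < d -> a <= b + d * K) -> a <= b.
Proof.
move=> le_ab; apply/ler_addgt0Pr => eps eps_gt0.
have K1_gt0 : 0 < `|K| + 1 by rewrite ltr_wpDl.
have d_gt0 : 0 < eps / (`|K| + 1) by rewrite divr_gt0.
apply: (le_trans (le_ab _ d_gt0)); rewrite lerD2l.
apply: (le_trans (ler_wpM2l (ltW d_gt0) (ler_norm K))).
by rewrite -[leRHS](divfK (lt0r_neq0 K1_gt0)) ler_pM2l // lerDl.
Qed.

Lemma ler_invMl (F : realFieldType) (k a b : F) :
  0 <= a -> 0 <= b -> a <= k * b -> k^-1 * a <= b.
Proof.
move=> a_ge0 b_ge0 le_a_kb; have [k_gt0 | k_le0] := ltrP 0 k.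
  by rewrite ler_pdivrMl.
by apply: le_trans b_ge0; rewrite mulr_le0_ge0 // invr_le0.
Qed.

Section UniformQuasiGreedy.
Variables (R : realType) (X : completeNormedModType R) (L : banach_lattice X)
  (e : nat -> X) (es : nat -> X -> R) (C : R).
Hypotheses (e_basic : basic_seq e) (es_coef : coef_functionals e es)
  (C_sup : (C%:E = ereal_sup (uqg_set L e es))%E).

Lemma greedy_vee_le x rho m : closed_span e x -> `|x| = 1 ->
  natural_greedy (fun n => es n x) rho -> `|greedy_vee L e es rho x m| <= C.
Proof.
move=> x_span x_norm rho_greedy; rewrite -lee_fin C_sup.
by apply: ereal_sup_ubound; exists m, x, rho.
Qed.

Lemma vee_psum_le_decreasing ns w : uniq ns ->
  (forall j, (j < size ns)%N -> w j != 0) ->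
  (forall i j, (i < j < size ns)%N -> `|w j| < `|w i|) ->
  `|vee_psum L e ns w| <= C * `|psum e ns w (size ns)|.
Proof.
move=> ns_uniq w_neq0 w_decr.
have [ns0 | ns_gt0] := posnP (size ns).
  by rewrite /vee_psum ns0 /= !psum0 labs0 normr0 mulr0.
set y := psum e ns w (size ns).
have y_neq0 : y != 0.
  apply: contra (w_neq0 _ ns_gt0) => /eqP y0.
  by rewrite -(coef_psum_nth e_basic es_coef w ns_uniq ns_gt0) -/y y0 (coef0 e_basic es_coef).
have t_gt0 : 0 < `|y|^-1 by rewrite invr_gt0 normr_gt0.
set t := `|y|^-1 in t_gt0 *.
have ty_norm : `|psum e ns (fun j => t * w j) (size ns)| = 1.
  by rewrite psumZ normrZ gtr0_norm // mulVf // normr_eq0.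
have tw_greedy := natural_greedy_psum e_basic es_coef (w := fun j => t * w j) ns_uniq.
have := greedy_vee_le (size ns) (psum_closed_span (w := fun j => t * w j) ns_uniq) ty_norm
  (tw_greedy _ _).
rewrite greedy_vee_psum // vee_psumZ // normrZ gtr0_norm // ler_pdivrMl ?normr_gt0 //.
rewrite mulrC; apply.
- by move=> j j_lt; apply: mulf_neq0; [exact: lt0r_neq0 | exact: w_neq0].
- by move=> i j ij_lt; rewrite !normrM ltr_pM2l ?normr_gt0 ?gt_eqF ?w_decr.
Qed.

Lemma vee_psum_le_unimodular ns c : uniq ns ->
  (forall i, (i < size ns)%N -> `|c i| = 1) ->
  `|vee_psum L e ns c| <= C * `|psum e ns c (size ns)|.
Proof.
move=> ns_uniq c_norm; set m := size ns.
pose q i := c i * (m - i)%N%:R.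
apply: (@ler_of_add_mul_gt0 _ _ _ (`|C| * `|psum e ns q m| + `|vee_psum L e ns q|)).
move=> d d_gt0; pose cd i := c i + d * q i.
have weight_gt0 i : 0 < 1 + d * (m - i)%N%:R.
  exact: ltr_wpDr (mulr_ge0 (ltW d_gt0) (ler0n _ _)) ltr01.
have cd_norm i : (i < m)%N -> `|cd i| = 1 + d * (m - i)%N%:R.
  move=> i_lt; have -> : cd i = c i * (1 + d * (m - i)%N%:R).
    by rewrite /cd /q mulrDr mulr1 mulrCA.
  by rewrite normrM c_norm // mul1r ger0_norm // ltW.
have vee_cd : `|vee_psum L e ns cd| <= C * `|psum e ns cd m|.
  apply: vee_psum_le_decreasing => // [j j_lt | i j /andP[lt_ij j_lt]].
    by rewrite -normr_eq0 cd_norm // gt_eqF.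
  by rewrite !cd_norm ?(ltn_trans lt_ij) // ltrD2l ltr_pM2l // ltr_nat; lia.
have vee_c : `|vee_psum L e ns c| <= `|vee_psum L e ns cd| + d * `|vee_psum L e ns q|.
  have c_split : c = (fun i => cd i + d * - q i).
    by apply: funext => i; rewrite /cd mulrN addrK.
  have := vee_psumD_le e L ns cd (fun i => d * - q i).
  rewrite -c_split vee_psumZ // vee_psumN => /(norm_lle (bigsup_labs_ge0 _ _ _)).
  by move/le_trans; apply; rewrite (le_trans (ler_normD _ _)) // normrZ gtr0_norm.
have psum_cd_dist : `| `|psum e ns cd m| - `|psum e ns c m| | <= d * `|psum e ns q m|.
  by rewrite (le_trans (ler_dist_dist _ _)) // psumD psumZ addrC addKr normrZ gtr0_norm.
have C_dist : C * `|psum e ns cd m| <= C * `|psum e ns c m| + d * (`|C| * `|psum e ns q m|).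
  rewrite -lerBlDl -mulrBr mulrCA (le_trans (ler_norm _)) // normrM.
  by rewrite ler_wpM2l.
lra.
Qed.

Lemma vee_psum_sign_change_le ns g h : uniq ns ->
  (forall i, (i < size ns)%N -> `|g i| = 1) ->
  (forall i, (i < size ns)%N -> h i = g i \/ h i = - g i) ->
  `|vee_psum L e ns h| <= 2 * C * `|psum e ns g (size ns)|.
Proof.
move=> ns_uniq g_norm h_sign; pose p := [pred i | h i == g i].
have [ns1 [g1 [uniq1 g1_from psum1 prefix1]]] := psum_reorder_filter e g p ns_uniq.
have [ns2 [g2 [uniq2 g2_from psum2 prefix2]]] := psum_reorder_filter e g (predC p) ns_uniq.
have bound1 : `|vee_psum L e ns1 g1| <= C * `|psum e ns g (size ns)|.
  rewrite -psum1; apply: vee_psum_le_unimodular => // i /g1_from[j j_lt ->].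
  exact: g_norm.
have bound2 : `|vee_psum L e ns2 g2| <= C * `|psum e ns g (size ns)|.
  rewrite -psum2; apply: vee_psum_le_unimodular => // i /g2_from[j j_lt ->].
  exact: g_norm.
have vee_split : le L (vee_psum L e ns h) (vee_psum L e ns1 g1 + vee_psum L e ns2 g2).
  apply: bigsup_least => k le_km.
  have [j1 le_j1 psum1_j1] := prefix1 k le_km.
  have [j2 le_j2 psum2_j2] := prefix2 k le_km.
  have -> : psum e ns h k = psum e ns1 g1 j1 - psum e ns2 g2 j2.
    rewrite psum1_j1 psum2_j2 /psum (bigID (fun i : 'I_k => p i)) /= -sumrN.
    congr (_ + _); apply: eq_bigr => i; first by move/eqP->.
    have i_lt : (i < size ns)%N := leq_trans (ltn_ord i) le_km.
    by case: (h_sign i i_lt) => ->; rewrite ?eqxx // scaleNr.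
  apply: Defs.le_trans (labsD _ _ _) _; rewrite labsN.
  by apply: lleD; apply: (bigsup_ub L (fun k => labs L (psum e _ _ k))).
have := le_trans (norm_lle (bigsup_labs_ge0 _ _ _) vee_split) (ler_normD _ _).
lra.
Qed.

End UniformQuasiGreedy.

Theorem proposition3p21 (R : realType) (X : completeNormedModType R)
  (L : banach_lattice X) (e : nat -> X) (es : nat -> X -> R) (C : R) :
  semi_normalized e -> basic_seq e -> coef_functionals e es ->
  (C%:E = ereal_sup (uqg_set L e es))%E ->
  (forall ns : seq nat, uniq ns ->
     `|vee_psum L e ns (fun _ => 1)| <= C * `|psum e ns (fun _ => 1) (size ns)|)
  /\
  (forall (ns : seq nat) (eps : nat -> R), uniq ns ->
     (forall i, (i < size ns)%N -> eps i = 1 \/ eps i = -1) ->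
     [/\ (2 * C)^-1 * `|vee_psum L e ns (fun _ => 1)| <= `|psum e ns eps (size ns)|,
         `|psum e ns eps (size ns)| <= `|vee_psum L e ns eps| &
         `|vee_psum L e ns eps| <= 2 * C * `|psum e ns (fun _ => 1) (size ns)|]).
Proof.
move=> _ e_basic es_coef C_sup.
split=> [ns ns_uniq | ns eps ns_uniq eps_sign].
  by apply: (vee_psum_le_unimodular e_basic es_coef C_sup ns_uniq) => i _; rewrite normr1.
have eps_norm i : (i < size ns)%N -> `|eps i| = 1.
  by move/eps_sign => [->|->]; rewrite ?normrN normr1.
split.
- apply: ler_invMl; rewrite ?normr_ge0 //.
  apply: (vee_psum_sign_change_le e_basic es_coef C_sup ns_uniq eps_norm) => i i_lt.
  by case: (eps_sign i i_lt) => ->; [left | right; rewrite opprK].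
- exact: norm_psum_le_vee_psum.
- by apply: (vee_psum_sign_change_le e_basic es_coef C_sup ns_uniq) => // i _; rewrite normr1.
Qed.
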